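(* For all integers $n\ge1$ and $k\ge0$, the generalized cosecant numbers satisfy $$c_{2n+2,k+1}=\frac{(2k+2-2n)(2k+1-2n)}{2n(2n+1)}\,c_{2n,k+1}+\frac{2n}{2n+1}\,c_{2n,k}.$$
   Context: The generalized cosecant numbers $c_{\rho,k}$ are defined as the coefficients of the power series $\left(\frac{x}{\sin x}\right)^{\rho}=\sum_{k\ge0}c_{\rho,k}\,x^{2k}$ (for $|x|<\pi$). *)

From Stdlib Require Import Reals Lra.
Open Scope R_scope.

(* [is_cosec_coeffs rho c] : the sequence [c] is the coefficient sequence of
   the power series (x / sin x)^rho = sum_{k>=0} c k * x^(2k), valid for
   |x| < PI.  At x = 0 the left side is understood as its limit 1, so we
   require the identity for 0 < |x| < PI (this determines the coefficients
   uniquely).  Real exponent via Rpower (x / sin x > 0 on that range). *)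
Definition is_cosec_coeffs (rho : R) (c : nat -> R) : Prop :=
  forall x : R, - PI < x < PI -> x <> 0 ->
    infinite_sum (fun k => c k * x ^ (2 * k)) (Rpower (x / sin x) rho).

(* The function y = (x / sin x)^rho has logarithmic derivative
   rho (1/x - cot x), from which one checks that it satisfies
     x^2 y'' - 2 rho x y' + (rho (rho + 1) + rho^2 x^2) y = rho (rho + 1) (x / sin x)^(rho + 2).
   Comparing the coefficients of x^(2k+2) on both sides gives
     rho (rho + 1) c_{rho+2,k+1} = (2k+2-rho) (2k+1-rho) c_{rho,k+1} + rho^2 c_{rho,k},
   and the theorem is the case rho = 2n. *)

From Stdlib Require Import Reals Lra Lia.
From Coquelicot Require Import Coquelicot.
Open Scope R_scope.

Definition punctured_disk (r x : R) : Prop := 0 < Rabs x < r.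

Lemma locally_punctured_disk r x : punctured_disk r x -> locally x (punctured_disk r).
Proof.
  intro Hx.
  apply (continuous_Rabs x (fun z => 0 < z < r)).
  exact (open_and _ _ (open_gt 0) (open_lt r) _ Hx).
Qed.

Lemma punctured_disk_neq_0 r x : punctured_disk r x -> x <> 0.
Proof. intros [H0 _] ->; rewrite Rabs_R0 in H0; lra. Qed.

Lemma CV_radius_gt_of_punctured_disk (a : nat -> R) r :
  (forall x, punctured_disk r x -> ex_pseries a x) ->
  forall y, Rabs y < r -> Rbar_lt (Rabs y) (CV_radius a).
Proof.
  intros Ha y Hy.
  pose proof (Rabs_pos y) as Hy0.
  set (x := (Rabs y + r) / 2).
  assert (Hx_abs : Rabs x = x) by (apply Rabs_pos_eq; unfold x; lra).
  assert (Hx : punctured_disk r x) by (unfold punctured_disk; rewrite Hx_abs; unfold x; lra).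
  apply (Rbar_lt_le_trans _ (Rabs x)).
  { simpl Rbar_lt; rewrite Hx_abs; unfold x; lra. }
  apply Rbar_not_lt_le; intro Hout.
  apply (CV_disk_outside a x Hout), ex_series_lim_0, ex_pseries_R, Ha, Hx.
Qed.

(* At the puncture both sums are continuous, hence they agree there too. *)
Lemma pseries_coeffs_unique (a b : nat -> R) r (f : R -> R) : 0 < r ->
  (forall x, punctured_disk r x -> is_pseries a x (f x)) ->
  (forall x, punctured_disk r x -> is_pseries b x (f x)) ->
  forall n, a n = b n.
Proof.
  intros Hr Ha Hb n.
  assert (R0 : Rabs 0 < r) by now rewrite Rabs_R0.
  pose proof (CV_radius_gt_of_punctured_disk a r
    (fun x Hx => ex_intro _ _ (Ha x Hx)) 0 R0) as Rad_a.
  pose proof (CV_radius_gt_of_punctured_disk b r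
    (fun x Hx => ex_intro _ _ (Hb x Hx)) 0 R0) as Rad_b.
  rewrite Rabs_R0 in Rad_a, Rad_b.
  assert (near0 : locally 0 (fun t => t <> 0 -> PSeries a t = PSeries b t)).
  { exists (mkposreal r Hr); intros t Ht Ht0.
    assert (Hdisk : punctured_disk r t).
    { split; [now apply Rabs_pos_lt|].
      revert Ht; unfold ball; simpl; unfold AbsRing_ball, abs, minus, plus, opp; simpl.
      now rewrite Ropp_0, Rplus_0_r. }
    now rewrite (is_pseries_unique _ _ _ (Ha t Hdisk)), (is_pseries_unique _ _ _ (Hb t Hdisk)). }
  assert (at0 : PSeries a 0 = PSeries b 0).
  { pose proof (is_lim_continuity _ _ (PSeries_continuity a 0 ltac:(now rewrite Rabs_R0))) as La.
    pose proof (is_lim_continuity _ _ (PSeries_continuity b 0 ltac:(now rewrite Rabs_R0))) as Lb.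
    assert (Lb' : is_lim (PSeries b) 0 (PSeries a 0))
      by (apply (is_lim_ext_loc (PSeries a)); [exact near0 | exact La]).
    apply is_lim_unique in Lb; apply is_lim_unique in Lb'.
    rewrite Lb' in Lb; now injection Lb. }
  apply (PSeries_ext_recip a b n Rad_a Rad_b).
  eapply filter_imp; [|exact near0]; intros t Ht.
  destruct (Req_dec t 0) as [->|Ht0]; auto.
Qed.

Lemma is_pseries_derive_punctured_disk (a : nat -> R) r (f f' : R -> R) :
  (forall x, punctured_disk r x -> is_pseries a x (f x)) ->
  (forall x, punctured_disk r x -> is_derive f x (f' x)) ->
  forall x, punctured_disk r x -> is_pseries (PS_derive a) x (f' x).
Proof.
  intros Ha Hf x Hx.
  pose proof (CV_radius_gt_of_punctured_disk a r
    (fun x Hx => ex_intro _ _ (Ha x Hx)) x (proj2 Hx)) as Rad.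
  replace (f' x) with (Derive (PSeries a) x); [now apply is_pseries_derive|].
  rewrite (Derive_ext_loc _ f); [now apply is_derive_unique, Hf|].
  eapply filter_imp; [|exact (locally_punctured_disk r x Hx)]; intros t Ht.
  now apply is_pseries_unique, Ha.
Qed.

Definition even_spread (c : nat -> R) (j : nat) : R :=
  if Nat.even j then c (Nat.div2 j) else 0.

Lemma even_spread_double c k : even_spread c (2 * k) = c k.
Proof.
  unfold even_spread; now rewrite Nat.even_mul, Nat.div2_double.
Qed.

Lemma even_spread_double_S c k : even_spread c (2 * k + 1) = 0.
Proof.
  unfold even_spread; now rewrite Nat.even_add, Nat.even_mul.
Qed.

Lemma is_pseries_even_spread (c : nat -> R) x l :
  is_series (fun k => c k * x ^ (2 * k)) l -> is_pseries (even_spread c) x l.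
Proof.
  intro Hc.
  replace l with (l + x * 0) by ring.
  apply is_pseries_odd_even; apply is_pseries_R.
  - eapply is_series_ext; [|exact Hc]; intro k.
    now rewrite even_spread_double, pow_mult.
  - eapply is_series_ext with (fun _ => zero).
    { intro k; rewrite even_spread_double_S; unfold zero; simpl; ring. }
    unfold is_series; eapply filterlim_ext; [|apply filterlim_const].
    intro n; symmetry; apply (sum_n_m_const_zero (G := R_AbelianMonoid)).
Qed.

Definition cosec_pow (rho x : R) : R := Rpower (x / sin x) rho.

Lemma sin_neq_0_punctured_disk x : punctured_disk PI x -> sin x <> 0.
Proof.
  intros [H0 HPI]; destruct (Rcase_abs x) as [Hneg|Hpos].
  - rewrite Rabs_left in * by lra.
    assert (sin x < 0) by (apply sin_lt_0_var; lra); lra.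
  - rewrite Rabs_pos_eq in * by lra.
    assert (0 < sin x) by (apply sin_gt_0; lra); lra.
Qed.

Lemma div_sin_pos x : punctured_disk PI x -> 0 < x / sin x.
Proof.
  intros [H0 HPI]; destruct (Rcase_abs x) as [Hneg|Hpos].
  - rewrite Rabs_left in * by lra.
    assert (sin x < 0) by (apply sin_lt_0_var; lra).
    replace (x / sin x) with (- x / - sin x) by (field; lra).
    apply Rdiv_lt_0_compat; lra.
  - rewrite Rabs_pos_eq in * by lra.
    assert (0 < sin x) by (apply sin_gt_0; lra).
    apply Rdiv_lt_0_compat; lra.
Qed.

Lemma is_pseries_cosec_coeffs rho c : is_cosec_coeffs rho c ->
  forall x, punctured_disk PI x -> is_pseries (even_spread c) x (cosec_pow rho x).
Proof.
  intros Hc x Hx.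
  apply is_pseries_even_spread, is_series_Reals, Hc.
  - pose proof (Rabs_def2 x PI (proj2 Hx)); lra.
  - exact (punctured_disk_neq_0 PI x Hx).
Qed.

Lemma sin_pow2_cos_pow2 x : sin x ^ 2 + cos x ^ 2 = 1.
Proof. rewrite <- (sin2_cos2 x); unfold Rsqr; ring. Qed.

Definition dlog_div_sin (x : R) : R := / x - cos x / sin x.

Lemma is_derive_cosec_pow rho x : punctured_disk PI x ->
  is_derive (cosec_pow rho) x (rho * dlog_div_sin x * cosec_pow rho x).
Proof.
  intro Hx.
  pose proof (sin_neq_0_punctured_disk x Hx) as Hs.
  pose proof (div_sin_pos x Hx) as Hp.
  pose proof (punctured_disk_neq_0 PI x Hx).
  unfold cosec_pow, Rpower, dlog_div_sin.
  auto_derive; [tauto|].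
  unfold Rdiv; field; tauto.
Qed.

Lemma is_derive_cosec_pow_deriv rho x : punctured_disk PI x ->
  is_derive (fun x => rho * dlog_div_sin x * cosec_pow rho x) x
    (rho * (/ sin x ^ 2 - / x ^ 2 + rho * dlog_div_sin x ^ 2) * cosec_pow rho x).
Proof.
  intro Hx.
  pose proof (sin_neq_0_punctured_disk x Hx) as Hs.
  pose proof (div_sin_pos x Hx) as Hp.
  pose proof (punctured_disk_neq_0 PI x Hx).
  replace (/ sin x ^ 2) with ((sin x ^ 2 + cos x ^ 2) / sin x ^ 2)
    by (rewrite sin_pow2_cos_pow2; field; tauto).
  unfold cosec_pow, Rpower, dlog_div_sin.
  auto_derive; [tauto|].
  unfold Rdiv; field; tauto.
Qed.

Lemma cosec_pow_plus_2 rho x : punctured_disk PI x ->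
  cosec_pow (rho + 2) x = cosec_pow rho x * (x / sin x) ^ 2.
Proof.
  intro Hx; unfold cosec_pow.
  rewrite Rpower_plus, <- Rpower_pow by now apply div_sin_pos.
  now replace (INR 2) with 2 by (simpl; ring).
Qed.

Lemma cosec_pow_ode rho x : punctured_disk PI x ->
  x ^ 2 * (rho * (/ sin x ^ 2 - / x ^ 2 + rho * dlog_div_sin x ^ 2) * cosec_pow rho x)
  - 2 * rho * x * (rho * dlog_div_sin x * cosec_pow rho x)
  + (rho * (rho + 1) + rho ^ 2 * x ^ 2) * cosec_pow rho x
  = rho * (rho + 1) * cosec_pow (rho + 2) x.
Proof.
  intro Hx.
  pose proof (sin_neq_0_punctured_disk x Hx) as Hs.
  pose proof (punctured_disk_neq_0 PI x Hx) as H0.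
  rewrite cosec_pow_plus_2 by exact Hx.
  apply Rminus_diag_uniq.
  transitivity (rho ^ 2 * x ^ 2 * cosec_pow rho x * (sin x ^ 2 + cos x ^ 2 - 1) / sin x ^ 2).
  - unfold dlog_div_sin; field; tauto.
  - rewrite sin_pow2_cos_pow2; field; exact Hs.
Qed.

Definition ode_coeffs (rho : R) (a : nat -> R) : nat -> R :=
  PS_plus
    (PS_plus (PS_incr_n (PS_derive (PS_derive a)) 2)
             (PS_scal (- 2 * rho) (PS_incr_1 (PS_derive a))))
    (PS_plus (PS_scal (rho * (rho + 1)) a) (PS_scal (rho ^ 2) (PS_incr_n a 2))).

Lemma ode_coeffs_SS rho a j :
  ode_coeffs rho a (S (S j)) =
  (INR j + 2 - rho) * (INR j + 1 - rho) * a (S (S j)) + rho ^ 2 * a j.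
Proof.
  unfold ode_coeffs, PS_plus, PS_scal, PS_derive; cbn -[INR].
  rewrite !S_INR; ring.
Qed.

Lemma is_pseries_ode_coeffs rho (a : nat -> R) x y0 y1 y2 :
  is_pseries a x y0 -> is_pseries (PS_derive a) x y1 ->
  is_pseries (PS_derive (PS_derive a)) x y2 ->
  is_pseries (ode_coeffs rho a) x
    (x ^ 2 * y2 - 2 * rho * x * y1 + (rho * (rho + 1) + rho ^ 2 * x ^ 2) * y0).
Proof.
  intros H0 H1 H2.
  replace (x ^ 2 * y2 - 2 * rho * x * y1 + (rho * (rho + 1) + rho ^ 2 * x ^ 2) * y0)
    with (plus (plus (scal (pow_n x 2) y2) (scal (- 2 * rho) (scal x y1)))
               (plus (scal (rho * (rho + 1)) y0) (scal (rho ^ 2) (scal (pow_n x 2) y0))))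
    by (rewrite pow_n_pow; unfold plus, scal; simpl; unfold mult; simpl; ring).
  unfold ode_coeffs.
  apply (is_pseries_plus (V := R_NormedModule));
    apply (is_pseries_plus (V := R_NormedModule)).
  1: now apply is_pseries_incr_n.
  all: apply (is_pseries_scal (K := R_AbsRing) (V := R_NormedModule)); [apply Rmult_comm|].
  - now apply is_pseries_incr_1.
  - exact H0.
  - now apply is_pseries_incr_n.
Qed.

Lemma cosec_coeffs_recurrence rho (c c' : nat -> R) k :
  is_cosec_coeffs rho c -> is_cosec_coeffs (rho + 2) c' ->
  rho * (rho + 1) * c' (S k) =
  (2 * INR k + 2 - rho) * (2 * INR k + 1 - rho) * c (S k) + rho ^ 2 * c k.
Proof.
  intros Hc Hc'.
  pose proof (is_pseries_cosec_coeffs rho c Hc) as Ha0.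
  pose proof (is_pseries_derive_punctured_disk _ PI _ _ Ha0 (is_derive_cosec_pow rho)) as Ha1.
  pose proof (is_pseries_derive_punctured_disk _ PI _ _ Ha1 (is_derive_cosec_pow_deriv rho))
    as Ha2.
  assert (Hode : forall x, punctured_disk PI x ->
    is_pseries (ode_coeffs rho (even_spread c)) x (rho * (rho + 1) * cosec_pow (rho + 2) x)).
  { intros x Hx; rewrite <- cosec_pow_ode by exact Hx.
    apply is_pseries_ode_coeffs; auto. }
  assert (Hscal : forall x, punctured_disk PI x ->
    is_pseries (PS_scal (rho * (rho + 1)) (even_spread c')) x
      (rho * (rho + 1) * cosec_pow (rho + 2) x)).
  { intros x Hx.
    apply (is_pseries_scal (K := R_AbsRing) (V := R_NormedModule)); [apply Rmult_comm|].
    now apply is_pseries_cosec_coeffs. }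
  pose proof (pseries_coeffs_unique _ _ PI _ PI_RGT_0 Hscal Hode (S (S (2 * k)))) as Hk.
  unfold PS_scal in Hk; rewrite ode_coeffs_SS in Hk.
  replace (S (S (2 * k))) with (2 * S k)%nat in Hk by lia.
  rewrite !even_spread_double, mult_INR in Hk.
  exact Hk.
Qed.

Theorem mainTheorem7 (c : R -> nat -> R)
  (Hc : forall rho : R, is_cosec_coeffs rho (c rho))
  (n k : nat) (hn : (1 <= n)%nat) :
  c (INR (2 * n + 2)) (S k) =
    (2 * INR k + 2 - 2 * INR n) * (2 * INR k + 1 - 2 * INR n)
      / (2 * INR n * (2 * INR n + 1)) * c (INR (2 * n)) (S k)
    + 2 * INR n / (2 * INR n + 1) * c (INR (2 * n)) k.
Proof.
  set (rho := INR (2 * n)).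
  assert (Hrho : rho = 2 * INR n) by (unfold rho; rewrite mult_INR; reflexivity).
  assert (Hpos : 0 < rho) by (rewrite Hrho; apply Rmult_lt_0_compat; [lra | apply lt_0_INR; lia]).
  assert (Hc' : is_cosec_coeffs (rho + 2) (c (INR (2 * n + 2))))
    by (replace (rho + 2) with (INR (2 * n + 2)) by (now rewrite plus_INR); apply Hc).
  pose proof (cosec_coeffs_recurrence _ _ _ k (Hc rho) Hc') as Hrec.
  rewrite <- Hrho.
  apply (Rmult_eq_reg_l (rho * (rho + 1))); [rewrite Hrec; field; lra | nra].
Qed.
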